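(* Let $\mathcal{C}$ be a covering of a finite set $E$ such that $SH$ is the closure operator of a matroid on $E$. Then $\mathcal{I}_{SH}(\mathcal{C})\subseteq\mathcal{I}(\mathcal{C})$ and $\mathcal{L}_{SH}(M(\mathcal{C}))\subseteq\mathcal{L}(M(\mathcal{C}))$.
   Context: A covering of $E$ is a family of nonempty subsets of $E$ with union $E$. $SH(X)=\bigcup\{K\in\mathcal{C}:K\cap X\neq\emptyset\}$. When $SH$ is the closure operator of a matroid, $\mathcal{I}_{SH}(\mathcal{C})=\{I\subseteq E:x\notin SH(I-\{x\})\ \forall x\in I\}$ is its family of independent sets and $\mathcal{L}_{SH}(M(\mathcal{C}))=\{X:SH(X)=X\}$ its set of closed sets. $\mathcal{I}(\mathcal{C})$ is the family of partial transversals of $\mathcal{C}$ (sets of distinct elements $e_1,\dots,e_k$ with $e_j\in K_{i_j}$ for distinct blocks $K_{i_1},\dots,K_{i_k}$), the independent sets of the transversal matroid $M(\mathcal{C})$, and $\mathcal{L}(M(\mathcal{C}))$ is the set of closed sets of $M(\mathcal{C})$, where $cl(X)=\{a:r(X\cup\{a\})=r(X)\}$. *)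

From mathcomp Require Import all_boot all_order.
Set Implicit Arguments. Unset Strict Implicit. Unset Printing Implicit Defensive.

(* The ground set E is the whole finite type T; a covering is a set of blocks. *)
Section Defs.
Variable T : finType.
Implicit Types (C : {set {set T}}) (X I : {set T}).

Definition covering C : Prop :=
  (forall K, K \in C -> K != set0) /\ \bigcup_(K in C) K = [set: T].

Definition SH C X : {set T} := \bigcup_(K in C | K :&: X != set0) K.

Definition is_matroid_closure (cl : {set T} -> {set T}) : Prop :=
  [/\ (forall X, X \subset cl X),
      (forall X Y : {set T}, X \subset Y -> cl X \subset cl Y),
      (forall X, cl (cl X) = cl X) &
      (forall (X : {set T}) (x y : T), y \in cl (x |: X) -> y \notin cl X -> x \in cl (y |: X))].

Definition indep_SH C I : bool := [forall x in I, x \notin SH C (I :\ x)].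

Definition ptrans C I : bool :=
  [exists f : {ffun T -> {set T}},
     [forall x in I, (f x \in C) && (x \in f x)] &&
     [forall x in I, forall y in I, (f x == f y) ==> (x == y)]].

Definition trank C X : nat := \max_(I : {set T} | (I \subset X) && ptrans C I) #|I|.
Definition tcl C X : {set T} := [set a | trank C (a |: X) == trank C X].

End Defs.

From mathcomp Require Import all_boot all_order.

(* Give each element of an SH-independent set I some block containing it: two
   distinct x, y in I cannot share a block, since x not in SH(I - x) means the
   blocks through x miss I - x.  Likewise, if X is SH-closed and a is not in X,
   a block through a misses X, so adding a to a maximum partial transversal of X
   gives a larger partial transversal of a + X: the rank strictly increases and
   a is not in the transversal closure of X. *)

Section Transversals.
Variables (T : finType) (C : {set {set T}}).
Implicit Types (X I K : {set T}) (x a : T).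

Lemma ptransP I :
  reflect (exists2 f : T -> {set T},
             {in I, forall x, (f x \in C) && (x \in f x)} & {in I &, injective f})
          (ptrans C I).
Proof.
apply: (iffP existsP) => [[f /andP[/forall_inP fC /forall_inP finj]]|[f fC finj]].
  exists f => // x y xI yI fxy; apply/eqP.
  by move/forall_inP: (finj x xI) => /(_ y yI)/implyP; apply; apply/eqP.
exists [ffun x => f x]; apply/andP; split; apply/forall_inP => x xI.
  by rewrite ffunE fC.
by apply/forall_inP => y yI; apply/implyP; rewrite !ffunE => /eqP/finj ->.
Qed.

Lemma ptrans0 : ptrans C set0.
Proof. by apply/ptransP; exists (fun=> set0) => x; rewrite inE. Qed.

Lemma ptrans_setU1 I K a :
  ptrans C I -> K \in C -> a \in K -> [disjoint K & I] -> ptrans C (a |: I).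
Proof.
move=> /ptransP[f fC finj] KC aK KI.
have aI : a \notin I by rewrite (disjointFr KI aK).
have fK y : y \in I -> f y != K.
  move=> yI; apply: contraTneq (KI) => <-.
  by apply/pred0Pn; exists y; rewrite /= yI andbT; case/andP: (fC y yI).
apply/ptransP; exists (fun y => if y == a then K else f y).
  move=> x /setU1P[->|xI]; first by rewrite eqxx KC aK.
  by rewrite (negbTE (memPn aI x xI)) fC.
move=> x y /setU1P[->|xI] /setU1P[->|yI] //; rewrite ?eqxx.
- by rewrite (negbTE (memPn aI y yI)) => /esym/eqP; rewrite (negbTE (fK y yI)).
- by rewrite (negbTE (memPn aI x xI)) => /eqP; rewrite (negbTE (fK x xI)).
by rewrite (negbTE (memPn aI x xI)) (negbTE (memPn aI y yI)); apply: finj.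
Qed.

Lemma trank_ltn_setU1 X a :
  a \notin X -> (forall I, I \subset X -> ptrans C I -> ptrans C (a |: I)) ->
  trank C X < trank C (a |: X).
Proof.
move=> aX extend.
have [|I0] := eq_bigmax_cond (fun I => #|I|)
                 (A := [pred I : {set T} | (I \subset X) && ptrans C I]).
  by apply/card_gt0P; exists set0; rewrite inE sub0set ptrans0.
rewrite inE => /andP[I0X I0tr] maxI0.
have -> : trank C X = #|I0| by rewrite -maxI0; apply: eq_bigl => I; rewrite inE.
have aI0 : a \notin I0 by apply: contra aX; apply: (subsetP I0X).
apply: (leq_trans _ (leq_bigmax_cond (a |: I0) _)); first by rewrite cardsU1 aI0.
by rewrite setUS //= extend.
Qed.

Lemma notin_SH_disjoint X x K :
  x \notin SH C X -> K \in C -> x \in K -> [disjoint K & X].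
Proof.
move=> xSH KC xK; rewrite -setI_eq0; apply: contraNT xSH => KX.
by apply/bigcupP; exists K; rewrite ?KC.
Qed.

Hypothesis covC : covering C.

Definition block x : {set T} := odflt set0 [pick K in C | x \in K].

Lemma blockP x : (block x \in C) && (x \in block x).
Proof.
rewrite /block; case: pickP => [K /andP[-> ->] //|noK].
have : x \in \bigcup_(K in C) K by rewrite covC.2 inE.
by case/bigcupP=> K KC xK; move: (noK K); rewrite KC xK.
Qed.

Lemma indep_SH_ptrans I : indep_SH C I -> ptrans C I.
Proof.
move=> /forall_inP indI; apply/ptransP; exists block => [x _|x y xI yI eqxy].
  exact: blockP.
apply/eqP; apply: contraNT (indI x xI) => yx.
have /andP[xC xK] := blockP x; have /andP[_] := blockP y; rewrite -eqxy => yK.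
apply/bigcupP; exists (block x); rewrite // xC /=.
by apply/set0Pn; exists y; rewrite !inE yK yI andbT eq_sym.
Qed.

Lemma SH_closed_tcl X : SH C X = X -> tcl C X = X.
Proof.
move=> closedX; apply/setP => a; rewrite inE.
have [aX|aX] := boolP (a \in X).
  by rewrite (setUidPr (_ : [set a] \subset X)) ?sub1set ?eqxx.
have /andP[KC aK] := blockP a.
have KX : [disjoint block a & X].
  by apply: (@notin_SH_disjoint X a) KC aK; rewrite closedX.
have extend I : I \subset X -> ptrans C I -> ptrans C (a |: I).
  by move=> IX Itr; apply: ptrans_setU1 Itr KC aK _; apply: disjointWr KX.
by apply/negbTE; rewrite eq_sym neq_ltn trank_ltn_setU1.
Qed.

End Transversals.

Theorem proposition26 (T : finType) (C : {set {set T}}) :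
  covering C -> is_matroid_closure (SH C) ->
  (forall I : {set T}, indep_SH C I -> ptrans C I) /\
  (forall X : {set T}, SH C X = X -> tcl C X = X).
Proof.
move=> covC _; split; [exact: indep_SH_ptrans | exact: SH_closed_tcl].
Qed.
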